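(* Let $k\ge 2$ and $i\in\{1,\ldots,k-1\}$. If $\binom{k}{i}$ is odd and $\binom{k-1}{i}$ is even, then $J(2k,k,i)$ does not admit perfect state transfer.
   Context: $J(2k,k,i)$ is the graph on the $k$-subsets of $\{1,\ldots,2k\}$ with $A\sim B$ iff $|A\cap B|=i$. For a simple graph $X$ with adjacency matrix $A$, let $\mathcal{H}_X(t)=e^{itA}$. $X$ admits perfect state transfer (PST) if $|\mathcal{H}_X(\tau)_{u,v}|=1$ for some vertices $u\ne v$ and some $\tau>0$. *)

From Stdlib Require Import Reals Factorial.
From HB Require Import structures.
From mathcomp Require Import all_boot.

Set Implicit Arguments.
Unset Strict Implicit.
Unset Printing Implicit Defensive.

Definition Jvert (k : nat) : finType :=
  {A : {set 'I_(2 * k)} | #|A| == k}.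

Definition Jadj (k i : nat) : rel (Jvert k) :=
  fun A B => #|val A :&: val B| == i.
Arguments Jadj : clear implicits.

(* Entry (u,v) of A^n, where A is the 0/1 adjacency matrix of the graph
   with vertex set T and adjacency relation adj (number of walks). *)
Fixpoint adjpow (T : finType) (adj : rel T) (n : nat) (u v : T) : nat :=
  match n with
  | 0 => (u == v : nat)
  | n'.+1 => \sum_(w : T) (adj u w : nat) * adjpow adj n' w v
  end.

Local Open Scope R_scope.

Definition re_ipow (n : nat) : R :=
  if (n %% 4 == 0)%N then 1 else if (n %% 4 == 2)%N then (-1) else 0.
Definition im_ipow (n : nat) : R :=
  if (n %% 4 == 1)%N then 1 else if (n %% 4 == 3)%N then (-1) else 0.

(* Partial sums of the real / imaginary parts of
   (e^{itA})_{uv} = sum_n (it)^n / n! (A^n)_{uv}. *)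
Definition H_re_partial (T : finType) (adj : rel T) (t : R) (u v : T)
  (N : nat) : R :=
  sum_f_R0 (fun n => (re_ipow n * t ^ n / INR (fact n)
                      * INR (adjpow adj n u v))) N.
Definition H_im_partial (T : finType) (adj : rel T) (t : R) (u v : T)
  (N : nat) : R :=
  sum_f_R0 (fun n => (im_ipow n * t ^ n / INR (fact n)
                      * INR (adjpow adj n u v))) N.

(* Perfect state transfer: |H(tau)_{u,v}| = 1 for some u <> v, tau > 0,
   where H(tau)_{u,v} = a + i b is the limit of the exponential series. *)
Definition admits_PST (T : finType) (adj : rel T) : Prop :=
  exists (u v : T) (tau : R), u <> v /\ (0 < tau) /\
    exists a b : R,
      Un_cv (H_re_partial adj tau u v) a /\
      Un_cv (H_im_partial adj tau u v) b /\
      (a ^ 2 + b ^ 2 = 1).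

(* If the row [u] of [U(t) = e^{itA}] has modulus 1 at [v], unitarity kills every
   other entry of that row, so [U(tau) x] evaluated at [u] equals [U(tau)_{uv} x_v]; for
   an eigenvector [x] of eigenvalue [th] it is also [e^{i th tau} x_u].  In a
   [d]-regular graph this gives [x_v = cos ((d - th) tau) x_u].  In [J(2k,k,i)] the
   eigenvectors [1_{p in .} - 1_{q in .}] with [p in u], [q notin u] force [v] to be
   the complement of [u] and [cos ((d - th1) tau) = -1]; a second-eigenspace vector
   built from two such pairs then gives [cos ((d - th2) tau) = 1].  So
   [(d - th1) tau] and [(d - th2) tau] are odd and even multiples of [pi], with
   [d - th1 = 2 C(k-1,i) C(k,i)] and [d - th2 = 2 (C(k,i) C(k-2,i-1) + C(k-1,i-1) C(k-1,i))],
   which the parity hypotheses on the binomials rule out. *)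

From Stdlib Require Import Reals Lra ZArith Lia.
From Coquelicot Require Import Coquelicot.
From HB Require Import structures.
From mathcomp Require Import all_boot zify.

Set Implicit Arguments.
Unset Strict Implicit.
Unset Printing Implicit Defensive.

Open Scope nat_scope.

(* The guard keeps [m - p] from truncating to [0] when [p > m]. *)
Definition nsupsets (n p m : nat) : nat := if p <= m then 'C(n - p, m - p) else 0.

Lemma card_supsets (X : finType) (U Q : {set X}) (m : nat) : Q \subset U ->
  #|[set Y : {set X} | [&& Y \subset U, #|Y| == m & Q \subset Y]]|
    = nsupsets #|U| #|Q| m.
Proof.
move=> QU; rewrite /nsupsets; case: leqP => [Qm | mQ]; last first.
  apply: eq_card0 => Y; rewrite inE; apply/negP => /and3P[_ /eqP cardY QY].
  by move: mQ; rewrite -cardY ltnNge subset_leq_card.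
have cardUQ : #|U :\: Q| = #|U| - #|Q| by rewrite cardsD (setIidPr QU).
rewrite -cardUQ -cards_draws.
set D := [set Z : {set X} | Z \subset U :\: Q & #|Z| == m - #|Q|].
have UQK Z : Z \in D -> (Z :|: Q) :\: Q = Z.
  by rewrite inE subsetD -andbA => /and3P[_ /setDidPl dZQ _]; rewrite setDUl setDv setU0.
rewrite -(@card_in_imset _ _ (fun Z => Z :|: Q) D); last first.
  by move=> Z1 Z2 D1 D2 E; rewrite -(UQK Z1 D1) -(UQK Z2 D2) /= E.
apply: eq_card => Y; rewrite inE; apply/and3P/imsetP => [[YU /eqP cardY QY] | [Z DZ ->]].
  exists (Y :\: Q); last by rewrite setDE setUIl (setUC (~: Q)) setUCr setIT (setUidPl QY).
  by rewrite inE setSD //= cardsD (setIidPr QY) cardY.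
move: DZ; rewrite inE subsetD -andbA => /and3P[ZU dZQ /eqP cardZ].
split; last exact: subsetUr.
- by rewrite subUset ZU QU.
- by rewrite cardsU (disjoint_setI0 dZQ) cards0 subn0 cardZ subnK.
Qed.

Lemma card_Jvert k (z : Jvert k) : #|val z| = k.
Proof. exact/eqP/(valP z). Qed.

Lemma card_Jvert_compl k (z : Jvert k) : #|~: val z| = k.
Proof. by have := cardsC (val z); rewrite card_ord card_Jvert; lia. Qed.

Section JohnsonNeighbours.
Variables (k i : nat).
Hypothesis i_le_k : i <= k.
Local Notation X := 'I_(2 * k).
Local Notation V := (Jvert k).

Lemma card_Jnbr_sup (z : V) (P : {set X}) :
  #|[set w : V | Jadj k i z w && (P \subset val w)]|
    = nsupsets k #|P :&: val z| i * nsupsets k #|P :\: val z| (k - i).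
Proof.
set Z := val z.
set S1 := [set A : {set X} | [&& A \subset Z, #|A| == i & P :&: Z \subset A]].
set S2 := [set B : {set X} | [&& B \subset ~: Z, #|B| == k - i & P :\: Z \subset B]].
have -> : nsupsets k #|P :&: Z| i = #|S1| by rewrite card_supsets /Z ?card_Jvert ?subsetIr.
have -> : nsupsets k #|P :\: Z| (k - i) = #|S2|.
  by rewrite card_supsets /Z ?card_Jvert_compl // setDE subsetIr.
rewrite -cardsX.
pose split_at (w : V) := (val w :&: Z, val w :\: Z).
have split_inj : injective split_at.
  by move=> w1 w2 [E1 E2]; apply: val_inj; rewrite -(setID (val w1) Z) E1 E2 setID.
rewrite -(card_imset _ split_inj); apply: eq_card => -[A B].
rewrite inE /=; apply/imsetP/andP => [[w] | [S1A S2B]].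
  rewrite inE => /andP[/eqP adj_zw Pw] [-> ->]; rewrite !inE.
  split; apply/and3P; split.
  - exact: subsetIr.
  - by rewrite setIC adj_zw.
  - exact: setSI.
  - by rewrite setDE subsetIr.
  - by rewrite cardsD card_Jvert setIC adj_zw.
  - exact: setSD.
move: S1A S2B; rewrite !inE => /and3P[AZ /eqP cardA PA] /and3P[BZ /eqP cardB PB].
have dBZ : [disjoint B & Z] by rewrite disjoints_subset.
have dAB : [disjoint A & B].
  by rewrite disjoint_sym disjoints_subset (subset_trans BZ) // setCS.
have AZK : (A :|: B) :&: Z = A by rewrite setIUl (setIidPl AZ) (disjoint_setI0 dBZ) setU0.
have BZK : (A :|: B) :\: Z = B.
  by rewrite setDUl (setDidPl dBZ) (eqP (_ : A :\: Z == set0)) ?set0U // setD_eq0.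
have cardAB : #|A :|: B| == k by rewrite cardsU (disjoint_setI0 dAB) cards0 cardA cardB; lia.
exists (Sub (A :|: B) cardAB : V); last by rewrite /split_at /= AZK BZK.
rewrite inE /Jadj /= setIC AZK cardA eqxx /=.
by apply/subsetP => y Py; rewrite inE; case: (boolP (y \in Z)) => yZ;
  [rewrite (subsetP PA) // | rewrite (subsetP PB) ?orbT //]; rewrite !inE Py yZ.
Qed.
End JohnsonNeighbours.

Lemma cards1I (T : finType) (p : T) (Z : {set T}) : #|[set p] :&: Z| = (p \in Z : nat).
Proof.
case: (boolP (p \in Z)) => pZ; first by rewrite (setIidPl _) ?cards1 ?sub1set.
by rewrite (disjoint_setI0 _) ?cards0 // disjoints1.
Qed.

Lemma cards1D (T : finType) (p : T) (Z : {set T}) : #|[set p] :\: Z| = (p \notin Z : nat).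
Proof. by rewrite setDE cards1I inE. Qed.

Lemma cards2I (T : finType) (p q : T) (Z : {set T}) : p != q ->
  #|[set p; q] :&: Z| = ((p \in Z : nat) + (q \in Z : nat))%N.
Proof.
move=> pq; rewrite setIUl cardsU !cards1I (disjoint_setI0 _) ?cards0 ?subn0 //.
by apply: (disjointW (subsetIl _ _) (subsetIl _ _)); rewrite disjoints1 inE.
Qed.

Lemma cards2D (T : finType) (p q : T) (Z : {set T}) : p != q ->
  #|[set p; q] :\: Z| = ((p \notin Z : nat) + (q \notin Z : nat))%N.
Proof. by move=> pq; rewrite setDE cards2I // !inE. Qed.

Lemma nsupsets_compl n p m : p <= n -> m <= n -> nsupsets n p (n - m) = 'C(n - p, m).
Proof.
rewrite /nsupsets => pn mn; case: leqP => [pnm | nmp]; last by rewrite bin_small //; lia.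
by rewrite subnAC bin_sub //; lia.
Qed.

Section Walks.
Variables (T : finType) (adj : rel T).

Lemma adjpowSr n u v : adjpow adj n.+1 u v = \sum_(w : T) adjpow adj n u w * adj w v.
Proof.
elim: n u v => [|n IHn] u v.
  rewrite /= (bigD1 v) //= big1 => [|w /negbTE->]; last by rewrite muln0.
  rewrite (bigD1 u) //= big1 => [|w]; last by rewrite eq_sym => /negbTE->.
  by rewrite !eqxx mul1n muln1.
change (\sum_(w : T) adj u w * adjpow adj n.+1 w v = \sum_(w : T) adjpow adj n.+1 u w * adj w v).
under eq_bigr => w _ do rewrite IHn big_distrr.
rewrite exchange_big; apply: eq_bigr => z _.
by rewrite /= big_distrl; apply: eq_bigr => w _; rewrite mulnA.
Qed.

Lemma adjpow_le n u v : adjpow adj n u v <= #|T| ^ n.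
Proof.
elim: n u v => [|n IHn] u v /=; first by case: (u == v).
rewrite expnS -sum_nat_const; apply: leq_sum => w _.
by case: (adj u w); rewrite ?mul1n ?mul0n.
Qed.
End Walks.

Local Open Scope R_scope.

Lemma RplusA : associative Rplus.
Proof. by move=> x y z; rewrite Rplus_assoc. Qed.

HB.instance Definition _ := Monoid.isComLaw.Build R 0 Rplus RplusA Rplus_comm Rplus_0_l.
HB.instance Definition _ := Monoid.isMulLaw.Build R 0 Rmult Rmult_0_l Rmult_0_r.
HB.instance Definition _ :=
  Monoid.isAddLaw.Build R Rmult Rplus Rmult_plus_distr_r Rmult_plus_distr_l.

Notation "\sum_ ( i : t ) F" := (\big[Rplus/0]_(i : t) F) : R_scope.
Notation "\sum_ ( i | P ) F" := (\big[Rplus/0]_(i | P) F) : R_scope.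

Lemma INR_sum (T : finType) (F : T -> nat) :
  INR (\sum_(w : T) F w)%N = \sum_(w : T) INR (F w).
Proof. exact: (big_morph INR plus_INR). Qed.

Lemma sumRN (T : finType) (F : T -> R) : \sum_(w : T) - F w = - \sum_(w : T) F w.
Proof. by rewrite (big_morph Ropp Ropp_plus_distr Ropp_0). Qed.

Lemma sumR_delta (T : finType) (x : T -> R) u : \sum_(w : T) (INR (u == w) * x w) = x u.
Proof.
rewrite (big_only1 u) ?eqxx /= => [|//|w]; first ring.
by rewrite eq_sym => /negbTE-> _ /=; ring.
Qed.

Lemma psumR_eq0 (T : finType) (P : pred T) (F : T -> R) :
  (forall w, 0 <= F w) -> \sum_(w | P w) F w = 0 -> forall w, P w -> F w = 0.
Proof.
move=> F_ge0 + w Pw; rewrite (bigD1 w) //=.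
have : 0 <= \sum_(z | P z && (z != w)) F z.
  by apply: big_ind => //; [lra | move=> x y; lra].
have := F_ge0 w; lra.
Qed.

Lemma const_of_derive0 (f : R -> R) : (forall t, is_derive f t 0) -> forall t, f t = f 0.
Proof.
move=> f' t; have [t0|[->|t0]] := Rtotal_order t 0 => //.
- by apply: eq_is_derive => // s _; exact: f'.
- by symmetry; apply: eq_is_derive => // s _; exact: f'.
Qed.

Lemma is_derive_Rplus (f g : R -> R) x df dg : is_derive f x df -> is_derive g x dg ->
  is_derive (fun t => f t + g t) x (df + dg).
Proof. exact: is_derive_plus. Qed.

Lemma is_derive_Rmult (f g : R -> R) x df dg : is_derive f x df -> is_derive g x dg ->
  is_derive (fun t => f t * g t) x (df * g x + f x * dg).
Proof. by move=> f' g'; apply: is_derive_mult => //; exact: Rmult_comm. Qed.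

Lemma is_derive_sum (T : finType) (f : T -> R -> R) (df : T -> R) x :
  (forall w, is_derive (f w) x (df w)) ->
  is_derive (fun t => \sum_(w : T) f w t) x (\sum_(w : T) df w).
Proof.
move=> f'; rewrite /index_enum; elim: (Finite.enum T) => [|w s IHs].
  rewrite big_nil; apply: (is_derive_ext (fun _ => 0)) => [t|]; first by rewrite big_nil.
  exact: is_derive_const.
rewrite big_cons; apply: (is_derive_ext (fun t => f w t + \big[Rplus/0]_(j <- s) f j t)).
  by move=> t; rewrite big_cons.
exact: is_derive_Rplus.
Qed.

Lemma re_ipowS n : re_ipow n.+1 = - im_ipow n.
Proof.
rewrite /re_ipow /im_ipow -addn1 -modnDml.
have : (n %% 4 < 4)%N by rewrite ltn_pmod.
case: (n %% 4)%N => [|[|[|[|r]]]] //= _; lra.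
Qed.

Lemma im_ipowS n : im_ipow n.+1 = re_ipow n.
Proof.
rewrite /re_ipow /im_ipow -addn1 -modnDml.
have : (n %% 4 < 4)%N by rewrite ltn_pmod.
case: (n %% 4)%N => [|[|[|[|r]]]] //= _; lra.
Qed.

Lemma Rabs_re_ipow n : Rabs (re_ipow n) <= 1.
Proof.
rewrite /re_ipow; do 2?case: ifP => _;
  rewrite ?Rabs_Ropp ?Rabs_R1 ?Rabs_R0; lra.
Qed.

Lemma Rabs_im_ipow n : Rabs (im_ipow n) <= 1.
Proof.
rewrite /im_ipow; do 2?case: ifP => _;
  rewrite ?Rabs_Ropp ?Rabs_R1 ?Rabs_R0; lra.
Qed.

Lemma CV_radius_exp_dominated (a : nat -> R) (M : R) : 0 <= M ->
  (forall n, Rabs (a n) <= M ^ n / INR (fact n)) ->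
  forall x, Rbar_lt (Rabs x) (CV_radius a).
Proof.
move=> M0 a_le x; set r := Rabs x + 1.
have r0 : 0 < r by rewrite /r; have := Rabs_pos x; lra.
have Mr0 : 0 <= M * r by apply: Rmult_le_pos; lra.
apply: (@Rbar_lt_le_trans _ r); first by rewrite /= /r; lra.
apply: (proj1 (CV_radius_bounded a)); exists (exp (M * r)) => n.
have fact0 : 0 < / INR (fact n) by apply/Rinv_0_lt_compat/INR_fact_lt_0.
rewrite Rabs_mult -RPow_abs (Rabs_right r); last lra.
apply: (Rle_trans _ ((M * r) ^ n / INR (fact n))).
  rewrite Rpow_mult_distr /Rdiv (Rmult_comm (M ^ n)) Rmult_assoc (Rmult_comm (r ^ n)).
  by apply: Rmult_le_compat_r; [apply: pow_le; lra | exact: a_le].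
apply: Rle_trans (exp_ge_taylor _ n Mr0).
case: n fact0 => [|n] fact0 /=; first lra.
have := cond_pos_sum (fun k => (M * r) ^ k / INR (fact k)) n.
have := Rmult_le_pos _ _ (pow_le _ n.+1 Mr0) (Rlt_le _ _ fact0).
rewrite /= => ? sum0; suff : 0 <= sum_f_R0 (fun k => (M * r) ^ k / INR (fact k)) n by lra.
apply: sum0 => k; apply: Rmult_le_pos; first exact: pow_le.
by apply/Rlt_le/Rinv_0_lt_compat/INR_fact_lt_0.
Qed.

Lemma PSeries_big (I : Type) (s : seq I) (c : I -> R) (f : I -> nat -> R) x :
  (forall w, ex_pseries (f w) x) ->
  ex_pseries (fun n => \big[Rplus/0]_(w <- s) (c w * f w n)) x /\
  PSeries (fun n => \big[Rplus/0]_(w <- s) (c w * f w n)) x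
    = \big[Rplus/0]_(w <- s) (c w * PSeries (f w) x).
Proof.
move=> f_ex; elim: s => [|w s [IHex IHeq]].
  rewrite big_nil; split.
    apply: (ex_pseries_ext (fun _ => 0)) => [n|]; first by rewrite big_nil.
    by apply: CV_radius_inside; rewrite CV_radius_const_0.
  by rewrite (PSeries_ext _ (fun _ => 0)) ?PSeries_const_0 // => n; rewrite big_nil.
have E n : \big[Rplus/0]_(j <- w :: s) (c j * f j n)
    = PS_plus (PS_scal (c w) (f w)) (fun n => \big[Rplus/0]_(j <- s) (c j * f j n)) n.
  by rewrite big_cons.
have scal_ex : ex_pseries (PS_scal (c w) (f w)) x.
  by apply: ex_pseries_scal => //; exact: Rmult_comm.
split; first by apply: (ex_pseries_ext _ _ _ (fun n => esym (E n))); exact: ex_pseries_plus.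
by rewrite (PSeries_ext _ _ _ E) PSeries_plus // PSeries_scal IHeq big_cons.
Qed.

Section Evolution.
Variables (T : finType) (adj : rel T).

Definition re_coef (u v : T) (n : nat) : R :=
  re_ipow n / INR (fact n) * INR (adjpow adj n u v).
Definition im_coef (u v : T) (n : nat) : R :=
  im_ipow n / INR (fact n) * INR (adjpow adj n u v).

Definition H_re (u v : T) (t : R) : R := PSeries (re_coef u v) t.
Definition H_im (u v : T) (t : R) : R := PSeries (im_coef u v) t.

Lemma Rabs_coef_le (r : nat -> R) u v n : Rabs (r n) <= 1 ->
  Rabs (r n / INR (fact n) * INR (adjpow adj n u v)) <= INR #|T| ^ n / INR (fact n).
Proof.
move=> r_le; have fact0 : 0 < / INR (fact n) by apply/Rinv_0_lt_compat/INR_fact_lt_0.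
have walks_le : INR (adjpow adj n u v) <= INR #|T| ^ n.
  have -> : INR #|T| ^ n = INR (#|T| ^ n)%N.
    by elim: (n) => //= m IHm; rewrite expnS mult_INR IHm.
  exact/le_INR/leP/adjpow_le.
rewrite !Rabs_mult (Rabs_right (/ _)) ?(Rabs_right (INR _)); try exact/Rle_ge/pos_INR.
  have := Rmult_le_pos _ _ (Rlt_le _ _ fact0) (pos_INR (adjpow adj n u v)).
  rewrite /Rdiv; nra.
exact/Rle_ge/Rlt_le.
Qed.

Lemma CV_radius_re_coef u v x : Rbar_lt (Rabs x) (CV_radius (re_coef u v)).
Proof.
apply: (CV_radius_exp_dominated (pos_INR #|T|)) => n.
exact/Rabs_coef_le/Rabs_re_ipow.
Qed.

Lemma CV_radius_im_coef u v x : Rbar_lt (Rabs x) (CV_radius (im_coef u v)).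
Proof.
apply: (CV_radius_exp_dominated (pos_INR #|T|)) => n.
exact/Rabs_coef_le/Rabs_im_ipow.
Qed.

Lemma H_re_partial_cv t u v : Un_cv (H_re_partial adj t u v) (H_re u v t).
Proof.
have /is_pseries_Reals := PSeries_correct _ _ (CV_radius_inside _ _ (CV_radius_re_coef u v t)).
apply: Un_cv_ext => N; apply: PartSum.sum_eq => n _; rewrite /re_coef /Rdiv; ring.
Qed.

Lemma H_im_partial_cv t u v : Un_cv (H_im_partial adj t u v) (H_im u v t).
Proof.
have /is_pseries_Reals := PSeries_correct _ _ (CV_radius_inside _ _ (CV_radius_im_coef u v t)).
apply: Un_cv_ext => N; apply: PartSum.sum_eq => n _; rewrite /im_coef /Rdiv; ring.
Qed.

Lemma PS_derive_re_coef u v n :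
  PS_derive (re_coef u v) n = \sum_(w : T) (- INR (adj w v) * im_coef u w n).
Proof.
rewrite /PS_derive /re_coef re_ipowS adjpowSr INR_sum fact_simpl mult_INR.
have n1 := not_0_INR _ (Nat.neq_succ_0 n); have fn := INR_fact_neq_0 n.
rewrite -Rmult_assoc big_distrr; apply: eq_bigr => w _ /=; rewrite mult_INR /im_coef.
by field; split; [exact: fn | exact: n1].
Qed.

Lemma PS_derive_im_coef u v n :
  PS_derive (im_coef u v) n = \sum_(w : T) (INR (adj w v) * re_coef u w n).
Proof.
rewrite /PS_derive /im_coef im_ipowS adjpowSr INR_sum fact_simpl mult_INR.
have n1 := not_0_INR _ (Nat.neq_succ_0 n); have fn := INR_fact_neq_0 n.
rewrite -Rmult_assoc big_distrr; apply: eq_bigr => w _ /=; rewrite mult_INR /re_coef.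
by field; split; [exact: fn | exact: n1].
Qed.

Lemma is_derive_H_re u v t :
  is_derive (H_re u v) t (\sum_(w : T) (- INR (adj w v) * H_im u w t)).
Proof.
have := is_derive_PSeries _ _ (CV_radius_re_coef u v t).
rewrite (PSeries_ext _ _ _ (PS_derive_re_coef u v)).
by case: (@PSeries_big _ (index_enum T) (fun w => - INR (adj w v)) (fun w => im_coef u w)
  t (fun w => CV_radius_inside _ _ (CV_radius_im_coef u w t))) => _ ->.
Qed.

Lemma is_derive_H_im u v t :
  is_derive (H_im u v) t (\sum_(w : T) (INR (adj w v) * H_re u w t)).
Proof.
have := is_derive_PSeries _ _ (CV_radius_im_coef u v t).
rewrite (PSeries_ext _ _ _ (PS_derive_im_coef u v)).
by case: (@PSeries_big _ (index_enum T) (fun w => INR (adj w v)) (fun w => re_coef u w)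
  t (fun w => CV_radius_inside _ _ (CV_radius_re_coef u w t))) => _ ->.
Qed.

Lemma H_re0 u v : H_re u v 0 = INR (u == v).
Proof. by rewrite /H_re PSeries_0 /re_coef /re_ipow /=; field. Qed.

Lemma H_im0 u v : H_im u v 0 = 0.
Proof. by rewrite /H_im PSeries_0 /im_coef /im_ipow /=; field. Qed.

Lemma is_derive_H_re_row (x : T -> R) u t :
  is_derive (fun t => \sum_(w : T) H_re u w t * x w) t
    (- \sum_(z : T) H_im u z t * \sum_(w : T) INR (adj z w) * x w).
Proof.
rewrite -sumRN.
have := is_derive_sum (fun w => is_derive_Rmult (is_derive_H_re u w t) (is_derive_const (x w) t)).
congr is_derive; under eq_bigr => w _ do rewrite Rmult_0_r Rplus_0_r big_distrl.
rewrite exchange_big; apply: eq_bigr => z _ /=; rewrite big_distrr -sumRN.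
by apply: eq_bigr => w _ /=; ring.
Qed.

Lemma is_derive_H_im_row (x : T -> R) u t :
  is_derive (fun t => \sum_(w : T) H_im u w t * x w) t
    (\sum_(z : T) H_re u z t * \sum_(w : T) INR (adj z w) * x w).
Proof.
have := is_derive_sum (fun w => is_derive_Rmult (is_derive_H_im u w t) (is_derive_const (x w) t)).
congr is_derive; under eq_bigr => w _ do rewrite Rmult_0_r Rplus_0_r big_distrl.
rewrite exchange_big; apply: eq_bigr => z _ /=; rewrite big_distrr.
by apply: eq_bigr => w _ /=; ring.
Qed.

(* [e^{itA}] is unitary when [A] is symmetric: the row norm has derivative
   [2 (x^T A y - y^T A x) = 0] where [x, y] are the real and imaginary rows. *)
Lemma H_row_norm (adj_sym : symmetric adj) u t :
  \sum_(w : T) ((H_re u w t)² + (H_im u w t)²) = 1.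
Proof.
pose F t := \sum_(w : T) (H_re u w t * H_re u w t + H_im u w t * H_im u w t).
have -> : \sum_(w : T) ((H_re u w t)² + (H_im u w t)²) = F t by [].
rewrite (const_of_derive0 (f := F)) => [|s].
  rewrite /F -[1](sumR_delta (fun _ => 1) u).
  by apply: eq_bigr => w _; rewrite H_re0 H_im0; case: (u == w) => /=; ring.
have := is_derive_sum (fun w => is_derive_Rplus
  (is_derive_Rmult (is_derive_H_re u w s) (is_derive_H_re u w s))
  (is_derive_Rmult (is_derive_H_im u w s) (is_derive_H_im u w s))).
congr is_derive.
have symA : \sum_(w : T) \sum_(z : T) INR (adj z w) * H_re u w s * H_im u z s
    = \sum_(w : T) \sum_(z : T) INR (adj z w) * H_im u w s * H_re u z s.
  by rewrite exchange_big; apply: eq_bigr => w _; apply: eq_bigr => z _; rewrite adj_sym /=; ring.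
transitivity (- 2 * \sum_(w : T) \sum_(z : T) INR (adj z w) * H_re u w s * H_im u z s
              + 2 * \sum_(w : T) \sum_(z : T) INR (adj z w) * H_im u w s * H_re u z s).
  rewrite !big_distrr -big_split; apply: eq_bigr => w _ /=.
  rewrite !big_distrl !big_distrr -!big_split; apply: eq_bigr => z _ /=; ring.
by rewrite symA /zero /=; ring.
Qed.

(* Conservation of [|row(t) . x - x_u e^{i th t}|^2], which vanishes at [t = 0]. *)
Lemma H_row_eigen (x : T -> R) (th : R) u t :
  (forall z, \sum_(w : T) INR (adj z w) * x w = th * x z) ->
  \sum_(w : T) H_re u w t * x w = x u * cos (th * t) /\
  \sum_(w : T) H_im u w t * x w = x u * sin (th * t).
Proof.
move=> eig.
pose G t := \sum_(w : T) H_re u w t * x w.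
pose K t := \sum_(w : T) H_im u w t * x w.
have G' s : is_derive G s (- th * K s).
  have := is_derive_H_re_row x u s; congr is_derive.
  under eq_bigr => z _ do rewrite eig.
  by rewrite -Ropp_mult_distr_l big_distrr; congr (- _); apply: eq_bigr => z _ /=; ring.
have K' s : is_derive K s (th * G s).
  have := is_derive_H_im_row x u s; congr is_derive.
  under eq_bigr => z _ do rewrite eig.
  by rewrite big_distrr; apply: eq_bigr => z _ /=; ring.
pose E t := (G t - x u * cos (th * t)) * (G t - x u * cos (th * t))
            + (K t - x u * sin (th * t)) * (K t - x u * sin (th * t)).
have E0 : E t = 0.
  rewrite (const_of_derive0 (f := E)) => [|s]; last first.
    have dG : is_derive (fun t => G t - x u * cos (th * t)) s
                (- th * K s + x u * th * sin (th * s)).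
      by apply: is_derive_Rplus (G' s) _; auto_derive; [|ring].
    have dK : is_derive (fun t => K t - x u * sin (th * t)) s
                (th * G s - x u * th * cos (th * s)).
      by apply: is_derive_Rplus (K' s) _; auto_derive; [|ring].
    have := is_derive_Rplus (is_derive_Rmult dG dG) (is_derive_Rmult dK dK).
    by congr is_derive; rewrite /zero /=; ring.
  rewrite /E.
  have -> : G 0 = x u.
    by rewrite -(sumR_delta x u); apply: eq_bigr => w _; rewrite H_re0.
  have -> : K 0 = 0 by rewrite /K big1 // => w _; rewrite H_im0; ring.
  by rewrite Rmult_0_r cos_0 sin_0; ring.
by have [/Rminus_diag_uniq <- /Rminus_diag_uniq <-] := Rplus_sqr_eq_0 _ _ E0.
Qed.
End Evolution.

Lemma admits_PST_H_row (T : finType) (adj : rel T) : admits_PST adj ->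
  exists u v tau, u <> v /\ 0 < tau /\ (H_re adj u v tau)² + (H_im adj u v tau)² = 1.
Proof.
move=> [u [v [tau [uv [tau0 [a [b [cv_a [cv_b ab1]]]]]]]]]; exists u, v, tau.
by rewrite !Rsqr_pow2 -(UL_sequence _ _ _ cv_a (H_re_partial_cv _ _ _ _))
           -(UL_sequence _ _ _ cv_b (H_im_partial_cv _ _ _ _)).
Qed.

Section PerfectStateTransfer.
Variables (T : finType) (adj : rel T) (u v : T) (tau : R).
Hypothesis adj_sym : symmetric adj.
Hypothesis pst : (H_re adj u v tau)² + (H_im adj u v tau)² = 1.

Lemma pst_row_support w : w != v -> H_re adj u w tau = 0 /\ H_im adj u w tau = 0.
Proof.
have := H_row_norm adj_sym u tau; rewrite (bigD1 v) //= pst => norm1 wv.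
apply: Rplus_sqr_eq_0; apply: (@psumR_eq0 _ (fun z => z != v)
  (fun z => (H_re adj u z tau)² + (H_im adj u z tau)²)) wv => [z|].
  exact: Rplus_le_le_0_compat (Rle_0_sqr _) (Rle_0_sqr _).
by apply: (Rplus_eq_reg_l 1); rewrite norm1 Rplus_0_r.
Qed.

Lemma pst_eigen (x : T -> R) (th : R) :
  (forall z, \sum_(w : T) INR (adj z w) * x w = th * x z) ->
  H_re adj u v tau * x v = x u * cos (th * tau) /\
  H_im adj u v tau * x v = x u * sin (th * tau).
Proof.
move=> /(H_row_eigen u tau) [<- <-].
by rewrite !(big_only1 v) // => w /pst_row_support[re0 im0] _; rewrite ?re0 ?im0; ring.
Qed.

Lemma pst_eigen_phase (d : R) (x : T -> R) (th : R) :
  (forall z, \sum_(w : T) INR (adj z w) = d) ->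
  (forall z, \sum_(w : T) INR (adj z w) * x w = th * x z) ->
  x v = x u * cos ((d - th) * tau) /\ x v ^ 2 = x u ^ 2.
Proof.
move=> reg /pst_eigen[re_x im_x].
have [re_1 im_1] : H_re adj u v tau = cos (d * tau) /\ H_im adj u v tau = sin (d * tau).
  have := @pst_eigen (fun _ => 1) d; rewrite !Rmult_1_r !Rmult_1_l; apply=> z.
  by rewrite -(reg z); apply: eq_bigr => w _; rewrite Rmult_1_r.
have norm_d := sin2_cos2 (d * tau); have norm_th := sin2_cos2 (th * tau).
rewrite /Rsqr -re_1 -im_1 in norm_d; rewrite /Rsqr in norm_th.
split.
  rewrite Rmult_minus_distr_r cos_minus -re_1 -im_1.
  transitivity (H_re adj u v tau * (H_re adj u v tau * x v)
                + H_im adj u v tau * (H_im adj u v tau * x v)).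
    by rewrite -[LHS]Rmult_1_r -norm_d; ring.
  by rewrite re_x im_x; ring.
transitivity ((H_re adj u v tau * x v) ^ 2 + (H_im adj u v tau * x v) ^ 2).
  by rewrite -[LHS]Rmult_1_r -norm_d; ring.
by rewrite re_x im_x -[RHS]Rmult_1_r -norm_th; ring.
Qed.
End PerfectStateTransfer.

Section JohnsonSpectrum.
Variables (k i : nat).
Hypothesis i_le_k : (i <= k)%N.
Local Notation X := 'I_(2 * k).
Local Notation V := (Jvert k).
Local Notation A := (Jadj k i).

Definition supind (S : {set X}) (w : V) : R := if S \subset val w then 1 else 0.

Definition Jcount (e f : nat) : R := INR (nsupsets k e i * nsupsets k f (k - i)).

Lemma sum_adj_supind (z : V) (S : {set X}) :
  \sum_(w : V) INR (A z w) * supind S w = Jcount #|S :&: val z| #|S :\: val z|.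
Proof.
rewrite /Jcount -card_Jnbr_sup // -sum1_card [in RHS]big_mkcond INR_sum.
apply: eq_bigr => w _; rewrite inE /supind.
by case: (A z w); case: (S \subset val w); rewrite /=; ring.
Qed.

Definition Jdeg : R := Jcount 0 0.
Definition Jeig1 : R := Jcount 1 0 - Jcount 0 1.
Definition Jeig2 : R := Jcount 2 0 - 2 * Jcount 1 1 + Jcount 0 2.

Definition Jvec1 (p q : X) (w : V) : R := supind [set p] w - supind [set q] w.
Definition Jvec2 (a1 b1 a2 b2 : X) (w : V) : R :=
  supind [set a1; a2] w - supind [set a1; b2] w - supind [set b1; a2] w + supind [set b1; b2] w.

Lemma supind1 p w : supind [set p] w = if p \in val w then 1 else 0.
Proof. by rewrite /supind sub1set. Qed.

Lemma supind2 p q w :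
  supind [set p; q] w = (if p \in val w then 1 else 0) * (if q \in val w then 1 else 0).
Proof.
by rewrite /supind subUset !sub1set; case: (p \in val w); case: (q \in val w) => /=; ring.
Qed.

Lemma Jregular (z : V) : \sum_(w : V) INR (A z w) = Jdeg.
Proof.
have := sum_adj_supind z set0; rewrite set0I set0D cards0 /Jdeg => <-.
by apply: eq_bigr => w _; rewrite /supind sub0set Rmult_1_r.
Qed.

Lemma Jvec1_eigen p q (z : V) :
  \sum_(w : V) INR (A z w) * Jvec1 p q w = Jeig1 * Jvec1 p q z.
Proof.
transitivity (\sum_(w : V) INR (A z w) * supind [set p] w
              - \sum_(w : V) INR (A z w) * supind [set q] w).
  by rewrite /Rminus -sumRN -big_split; apply: eq_bigr => w _ /=; rewrite /Jvec1; ring.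
rewrite !sum_adj_supind !cards1I !cards1D /Jvec1 !supind1 /Jeig1.
by case: (p \in val z); case: (q \in val z); rewrite /=; ring.
Qed.

Lemma Jvec2_eigen a1 b1 a2 b2 (z : V) :
  a1 != a2 -> a1 != b2 -> b1 != a2 -> b1 != b2 ->
  \sum_(w : V) INR (A z w) * Jvec2 a1 b1 a2 b2 w = Jeig2 * Jvec2 a1 b1 a2 b2 z.
Proof.
move=> ? ? ? ?.
transitivity (\sum_(w : V) INR (A z w) * supind [set a1; a2] w
              - \sum_(w : V) INR (A z w) * supind [set a1; b2] w
              - \sum_(w : V) INR (A z w) * supind [set b1; a2] w
              + \sum_(w : V) INR (A z w) * supind [set b1; b2] w).
  rewrite /Rminus -!sumRN -!big_split; apply: eq_bigr => w _ /=; rewrite /Jvec2; ring.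
rewrite !sum_adj_supind !cards2I // !cards2D // /Jvec2 !supind2 /Jeig2.
by case: (a1 \in val z); case: (b1 \in val z); case: (a2 \in val z); case: (b2 \in val z);
  rewrite /= ?add0n ?addn0 ?add1n; ring.
Qed.
End JohnsonSpectrum.

Lemma Jadj_sym k i : symmetric (Jadj k i).
Proof. by move=> z w; rewrite /Jadj setIC. Qed.

Lemma Jvert_compl_exists k (z : Jvert k) : (0 < k)%N -> exists q, q \notin val z.
Proof.
move=> k0; have : (0 < #|~: val z|)%N by rewrite card_Jvert_compl.
by case/card_gt0P => q; rewrite inE; exists q.
Qed.

Section JohnsonPST.
Variables (k i : nat) (u v : Jvert k) (tau : R).
Hypotheses (k_gt1 : (1 < k)%N) (i_le_k : (i <= k)%N) (uv : u <> v).
Hypothesis pst : (H_re (Jadj k i) u v tau)² + (H_im (Jadj k i) u v tau)² = 1.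

Lemma Jpst_phase x th : (forall z, \sum_(w : Jvert k) INR (Jadj k i z w) * x w = th * x z) ->
  x v = x u * cos ((Jdeg k i - th) * tau) /\ x v ^ 2 = x u ^ 2.
Proof. by move=> eig; have := pst_eigen_phase (@Jadj_sym k i) pst (Jregular i_le_k) eig. Qed.

Lemma Jpst_vec1 p q : p \in val u -> q \notin val u ->
  Jvec1 p q v = cos ((Jdeg k i - Jeig1 k i) * tau) /\ Jvec1 p q v ^ 2 = 1.
Proof.
move=> pu qu; have [-> ->] := Jpst_phase (Jvec1_eigen i_le_k p q).
by rewrite /Jvec1 !supind1 pu (negbTE qu); split; ring.
Qed.

Lemma Jpst_phase1 : cos ((Jdeg k i - Jeig1 k i) * tau) = -1.
Proof.
have [a au] : exists a, a \in val u by apply/card_gt0P; rewrite card_Jvert; lia.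
have [b bu] := Jvert_compl_exists u (ltnW k_gt1).
have not1 : cos ((Jdeg k i - Jeig1 k i) * tau) <> 1.
  move=> c1; apply: uv; apply/val_inj/eqP; rewrite eqEcard !card_Jvert leqnn andbT.
  apply/subsetP => p pu; have [] := Jpst_vec1 pu bu; rewrite c1 /Jvec1 !supind1.
  by case: (p \in val v); case: (b \in val v) => //=; lra.
have [] := Jpst_vec1 au bu; move: not1; rewrite /Jvec1 !supind1.
by case: (a \in val v); case: (b \in val v) => /= ne1 c sq; try lra; case: ne1; rewrite -c; ring.
Qed.

Lemma Jpst_compl p : (p \in val v) = (p \notin val u).
Proof.
have [a au] : exists a, a \in val u by apply/card_gt0P; rewrite card_Jvert; lia.
have [b bu] := Jvert_compl_exists u (ltnW k_gt1).
case pu: (p \in val u).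
  have [] := Jpst_vec1 pu bu; rewrite Jpst_phase1 /Jvec1 !supind1.
  by case: (p \in val v); case: (b \in val v) => //= c; lra.
have [] := Jpst_vec1 au (negbT pu); rewrite Jpst_phase1 /Jvec1 !supind1.
by case: (a \in val v); case: (p \in val v) => //= c; lra.
Qed.

Lemma Jpst_phase2 : cos ((Jdeg k i - Jeig2 k i) * tau) = 1.
Proof.
have [a1 [a2 [a1u a2u a12]]] : exists a1 a2, [/\ a1 \in val u, a2 \in val u & a1 != a2].
  by apply/card_gt1P; rewrite card_Jvert.
have [b1 [b2 [b1u b2u b12]]] : exists b1 b2, [/\ b1 \in ~: val u, b2 \in ~: val u & b1 != b2].
  by apply/card_gt1P; rewrite card_Jvert_compl.
rewrite !inE in b1u b2u.
have neq x y : x \in val u -> y \notin val u -> x != y by move=> xu; apply: contraNneq => <-.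
have a1b2 := neq _ _ a1u b2u; have b1a2 : b1 != a2 by rewrite eq_sym neq.
have [+ _] := Jpst_phase (fun z => Jvec2_eigen i_le_k z a12 a1b2 b1a2 b12).
rewrite /Jvec2 !supind2 !Jpst_compl a1u a2u (negbTE b1u) (negbTE b2u) /=; lra.
Qed.
End JohnsonPST.

Lemma Jgaps k i : (2 <= k)%N -> (1 <= i)%N -> (i <= k - 1)%N ->
  Jdeg k i - Jeig1 k i = INR (2 * 'C(k - 1, i) * 'C(k, i)) /\
  Jdeg k i - Jeig2 k i =
    INR (2 * ('C(k, i) * 'C(k - 2, i - 1) + 'C(k - 1, i - 1) * 'C(k - 1, i))).
Proof.
case: k => [|[|K]] // _; case: i => [|I] // _ IK.
have IK2 : (I.+1 <= K.+2)%N by lia.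
rewrite /Jdeg /Jeig1 /Jeig2 /Jcount !nsupsets_compl // /nsupsets.
rewrite !subSS !subn0 leq0n ltn0Sn ltnS /= {IK IK2}.
have low2 : ((if (0 < I)%N then 'C(K, I - 1) else 0) + 'C(K, I) = 'C(K.+1, I))%N.
  by case: I => [|I]; [rewrite add0n !bin0 | rewrite subSS subn0 addnC].
move: low2; set c2 := (if _ then _ else _)%N => low2.
rewrite -low2 !(binS K.+1) !(binS K) -low2.
rewrite !(mult_INR, plus_INR); change (INR 2) with (1 + 1).
split; ring.
Qed.

Lemma Z_odd_of_nat n : Z.odd (Z.of_nat n) = odd n.
Proof. by elim: n => [|n IHn] //; rewrite Nat2Z.inj_succ Z.odd_succ -Z.negb_odd IHn. Qed.

Lemma cos_INR_PI n : cos (INR n * PI) = if odd n then -1 else 1.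
Proof.
elim: n => [|n IHn]; first by rewrite Rmult_0_l cos_0.
by rewrite S_INR Rmult_plus_distr_r Rmult_1_l neg_cos IHn oddS; case: (odd n) => /=; ring.
Qed.

Lemma cos_IZR_PI z : cos (IZR z * PI) = if Z.odd z then -1 else 1.
Proof.
have cos_pos p : cos (IZR (Z.pos p) * PI) = if Z.odd (Z.pos p) then -1 else 1.
  by rewrite -positive_nat_Z -INR_IZR_INZ cos_INR_PI Z_odd_of_nat.
case: z => [|p|p]; first by rewrite Rmult_0_l cos_0.
  exact: cos_pos.
by rewrite -Pos2Z.opp_pos opp_IZR Ropp_mult_distr_l_reverse cos_neg Z.odd_opp.
Qed.

Lemma cos_eq_pm1 x (b : bool) : cos x = (if b then -1 else 1) ->
  exists z, x = IZR z * PI /\ Z.odd z = b.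
Proof.
move=> cosx; have /sin_eq_0_0[z xE] : sin x = 0.
  have := sin2_cos2 x; rewrite cosx /Rsqr => sc; case: b {cosx} sc => sc; nra.
exists z; split => //; move: cosx; rewrite xE cos_IZR_PI.
by case: (Z.odd z); case: b => //; lra.
Qed.

(* Read [a, b, c, e] as [C(k-1,i-1), C(k-1,i), C(k,i), C(k-2,i-1)]: multiplying by
   [k (k - 1)] and cancelling [b c], then [k], equates an odd and an even number. *)
Lemma Johnson_parity_obstruction (k i a b c e j l : Z) :
  (0 < k)%Z -> (k * a = i * c)%Z -> ((k - 1) * e = i * b)%Z -> (b * c <> 0)%Z ->
  Z.odd j -> Z.odd a -> Z.odd l = false ->
  (j * (c * e + a * b) = l * (b * c))%Z -> False.
Proof.
move=> k0 ka ke bc0 odd_j odd_a even_l jl.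
have E1 : (j * i * (2 * k - 1) = l * k * (k - 1))%Z.
  apply: (Z.mul_reg_l _ _ _ bc0).
  transitivity (j * (c * ((k - 1) * e) * k + k * a * b * (k - 1)))%Z.
    by rewrite ke ka; ring.
  by transitivity (j * (c * e + a * b) * (k * (k - 1)))%Z; [ring | rewrite jl; ring].
have E2 : (j * (2 * k - 1) * a = l * (k - 1) * c)%Z.
  apply: (Z.mul_reg_l _ _ k); first lia.
  transitivity (j * (2 * k - 1) * (k * a))%Z; first ring.
  by rewrite ka; transitivity (j * i * (2 * k - 1) * c)%Z; [ring | rewrite E1; ring].
have := f_equal Z.odd E2; rewrite !Z.odd_mul Z.odd_sub Z.odd_mul even_l /=.
by rewrite odd_j odd_a.
Qed.

Lemma Johnson_phases_incompatible k i tau :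
  (2 <= k)%N -> (1 <= i)%N -> (i <= k - 1)%N -> odd 'C(k, i) -> ~~ odd 'C(k - 1, i) ->
  cos ((Jdeg k i - Jeig1 k i) * tau) = -1 -> cos ((Jdeg k i - Jeig2 k i) * tau) = 1 -> False.
Proof.
case: k => [|[|K]] // _; case: i => [|I] // _ IK.
have [-> ->] := @Jgaps K.+2 I.+1 isT isT IK.
rewrite !subSS !subn0 => odd_c even_b.
move=> /(@cos_eq_pm1 _ true)[j [Ej odd_j]] /(@cos_eq_pm1 _ false)[l [El even_l]].
have odd_a : odd 'C(K.+1, I) by move: odd_c; rewrite binS oddD (negbTE even_b).
have b0 : (0 < 'C(K.+1, I.+1))%N by rewrite bin_gt0; lia.
have c0 : (0 < 'C(K.+2, I.+1))%N by rewrite bin_gt0; lia.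
have ka := mul_bin_diag K.+2 I; have ke := mul_bin_diag K.+1 I.
move: 'C(K.+1, I) 'C(K.+1, I.+1) 'C(K.+2, I.+1) 'C(K, I) => a b c e in Ej El odd_a b0 c0 ka ke *.
rewrite !(mult_INR, plus_INR) !INR_IZR_INZ in Ej El.
change (IZR (Z.of_nat 2)) with 2 in Ej; change (IZR (Z.of_nat 2)) with 2 in El.
apply: (@Johnson_parity_obstruction (Z.of_nat K.+2) (Z.of_nat I.+1) (Z.of_nat a) (Z.of_nat b)
          (Z.of_nat c) (Z.of_nat e) j l); rewrite ?Z_odd_of_nat //; try lia.
apply: (Z.mul_reg_l _ _ 2) => //; apply: eq_IZR; apply: (Rmult_eq_reg_r PI); last exact: PI_neq0.
rewrite !(mult_IZR, plus_IZR).
set A := IZR (Z.of_nat a) in El *; set B := IZR (Z.of_nat b) in Ej El *.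
set C := IZR (Z.of_nat c) in Ej El *; set E := IZR (Z.of_nat e) in El *.
transitivity (2 * (C * E + A * B) * (IZR j * PI)); first ring.
transitivity (2 * (B * C) * (IZR l * PI)); last ring.
by rewrite -Ej -El; ring.
Qed.

Theorem mainTheorem9 (k i : nat) :
  (2 <= k)%N -> (1 <= i)%N -> (i <= k - 1)%N ->
  odd 'C(k, i) -> ~~ odd 'C(k - 1, i) ->
  ~ admits_PST (Jadj k i).
Proof.
move=> k2 i1 ik odd_c even_b /admits_PST_H_row[u [v [tau [uv [_ pst]]]]].
have i_le_k : (i <= k)%N by lia.
apply: (Johnson_phases_incompatible k2 i1 ik odd_c even_b).
- exact: Jpst_phase1 k2 i_le_k uv pst.
- exact: Jpst_phase2 k2 i_le_k uv pst.
Qed.
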